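(* Assume (A) and (D), and fix $t>0$. Let $G_t(r)=f^2(r)\exp(\widetilde Ktg(r))$, $w_t(r)=g^2(r)\exp(Ktg(r))$, $\widetilde w_t(r)=g^2(r)\exp(\widetilde Ktg(r))$. Let $\kappa,\widetilde\kappa>0$ and define $\alpha_t(u)=(f^2)^{-1}(\kappa/u)$ and $\beta_t(u)=G_t^{-1}(\widetilde\kappa/u)$ for $u$ large enough, where $G_t^{-1}$ is the inverse of $G_t$ restricted to a half-line on which $G_t$ is continuous and strictly decreasing (such a half-line exists). (a) For every $\varepsilon\in(0,1)$ there exists $r_\varepsilon>0$ with $f^2(r)\le G_t(r)\le f^{2-\varepsilon}(r)$ for $r>r_\varepsilon$; and for every $\delta>0$, $$\lim_{u\to\infty}\frac{w_t(\alpha_t(u))}{u^\delta}=\lim_{u\to\infty}\frac{\widetilde w_t(\beta_t(u))}{u^\delta}=0.$$ (b) If moreover $m=g$ satisfies, for some $\omega\ge0$, the condition: for every $c>0$ and $\lambda\ge1$, $\limsup_{s\to0^+}\frac{g(f^{-1}(cs^\lambda))}{g(f^{-1}(s))}\le\lambda^\omega$, then $$\lim_{u\to\infty}\frac{g(\beta_t(u))}{g(\alpha_t(u))}=1.$$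
   Context: Setting. Fix $d\ge1$. Let $A$ be a positive semidefinite $d\times d$ matrix and $\nu$ a symmetric Lévy measure on $\mathbb R^d\setminus\{0\}$ (positive Radon measure with $\int(1\wedge|z|^2)\,\nu(dz)<\infty$, $\nu(-B)=\nu(B)$) with $\nu(\mathbb R^d\setminus\{0\})=\infty$, absolutely continuous with density also denoted $\nu(x)$. The Lévy operator $L$ on $L^2(dx)$ is the Fourier multiplier $\widehat{Lh}(\xi)=-\Psi(\xi)\widehat h(\xi)$ with $\Psi(\xi)=\tfrac12A\xi\cdot\xi+\int(1-\cos(\xi\cdot z))\,\nu(dz)$; $\{P_t\}_{t\ge0}$ is the associated convolution semigroup, $P_th(x)=\int p_t(y-x)h(y)\,dy$ with densities $p_t$. Let $V$ be locally bounded on $\mathbb R^d$ with $V(x)\to\infty$ as $|x|\to\infty$, and let $H=-L+V$ (self-adjoint, bounded below, defined via quadratic forms on $L^2(dx)$). For $t>0$, $e^{-tH}$ has a continuous, positive, symmetric kernel $u_t(x,y)$. Let $\lambda_0=\inf\sigma(H)$ (a simple eigenvalue) and $\varphi_0$ the corresponding strictly positive, continuous, bounded eigenfunction with $\|\varphi_0\|_{L^2(dx)}=1$. Set $\mu(dx)=\varphi_0^2(x)\,dx$ (a probability measure), $q_t(x,y)=\dfrac{e^{\lambda_0t}u_t(x,y)}{\varphi_0(x)\varphi_0(y)}$ and $Q_th(x)=\int q_t(x,y)h(y)\,\mu(dy)$; $\{Q_t\}$ is a semigroup of contractions on every $L^p(\mu)$, $1\le p\le\infty$, and $q_t$ is symmetric.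 Assumption (A): there exist a strictly decreasing continuous $f:(0,\infty)\to(0,\infty)$, a strictly increasing continuous $g:[0,\infty)\to(0,\infty)$, constants $C_1,C_2\ge1$ and $R_0>0$ such that $C_1^{-1}f(|x|)\le\nu(x)\le C_1f(|x|)$ for $x\ne0$ and $C_2^{-1}g(|x|)\le V(x)\le C_2g(|x|)$ for $|x|\ge R_0$, and moreover: (A1) there is $C_3>0$ with $\int_{\{|x-y|>1,\,|y|>1\}}f(|x-y|)f(|y|)\,dy\le C_3f(|x|)$ for $|x|\ge1$; (A2) $(t,x)\mapsto p_t(x)$ is continuous on $(0,\infty)\times\mathbb R^d$ and for every $t_b>0$ there are $C_4,C_5>0$ with $p_t(x)\le C_4\big([e^{C_5t}f(|x|)]\wedge1\big)$ for $x\neq0$, $t\ge t_b$, and $\sup_{t\in(0,t_b]}\sup_{r\le|x|\le2}p_t(x)<\infty$ for every $r\in(0,1]$; (A3) there is $C_6\ge1$ with $g(r+1)\le C_6g(r)$ for $r\ge R_0$. Under (A), $f$ is a bijection of $(0,\infty)$ onto $(0,\infty)$ and $f^{-1}$, $(f^2)^{-1}$ denote the inverses. We write $f_1=f\wedge1$. Condition (D): the map $r\mapsto g(r)/|\log f(r)|$ is eventually decreasing and $\lim_{r\to\infty}g(r)/|\log f(r)|=0$. Heat kernel estimate (a known consequence of (A), used as standing input): for every $T>0$ there exist $\rho>1$, $C=C(T)>0$ and constants $K,\widetilde K>0$ independent of $T$ such that for all $x,y\in\mathbb R^d$ and $t\ge T$, $C^{-1}\max\{1,e^{\lambda_0t}\Gamma(\widetilde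 Kt,x,y)\}\le q_t(x,y)\le C\max\{1,e^{\lambda_0t}\Gamma(Kt,x,y)\}$, where $\Gamma(\tau,x,y)=\dfrac{\mathbf 1_{\{|x|,|y|>\rho\}}}{f_1(|x|)f_1(|y|)}\displaystyle\int_{\rho-1<|z|<|x|\vee|y|}f_1(|x-z|)f_1(|z-y|)e^{-\tau g(|z|)}\,dz$. Throughout, $K$ and $\widetilde K$ denote fixed constants for which this two-sided estimate holds. *)

From HB Require Import structures.
From mathcomp Require Import all_boot all_order all_algebra.
From mathcomp Require Import all_classical all_reals all_analysis.
Set Implicit Arguments. Unset Strict Implicit. Unset Printing Implicit Defensive.
Import Order.TTheory GRing.Theory Num.Theory.
Import numFieldNormedType.Exports.
Local Open Scope classical_set_scope.
Local Open Scope ring_scope.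

Section Defs.
Variable R : realType.

Definition Gt (f g : R -> R) (Kt t : R) (r : R) : R :=
  f r ^+ 2 * expR (Kt * t * g r).

(* w_t(r) = g^2(r) exp(K t g(r))  (also used with Kt for \widetilde w_t) *)
Definition wt (g : R -> R) (K t : R) (r : R) : R :=
  g r ^+ 2 * expR (K * t * g r).

Definition inv_pos (h : R -> R) (y : R) : R :=
  xget 0 [set x | 0 < x /\ h x = y].

Definition inv_ge (a : R) (h : R -> R) (y : R) : R :=
  xget a [set x | a <= x /\ h x = y].

Definition alpha_t (f : R -> R) (kappa u : R) : R :=
  inv_pos (fun r => f r ^+ 2) (kappa / u).

Definition beta_t (f g : R -> R) (Kt t a kappat u : R) : R :=
  inv_ge a (Gt f g Kt t) (kappat / u).

Definition cont_strict_decr_from (h : R -> R) (a : R) : Prop :=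
  {within [set x : R | a <= x], continuous h} /\
  (forall x y, a <= x -> x < y -> h y < h x).

End Defs.

From HB Require Import structures.
From mathcomp Require Import all_boot all_order all_algebra.
From mathcomp Require Import all_classical all_reals all_analysis.
From mathcomp Require Import lra ring.
Import Order.TTheory GRing.Theory Num.Theory.
Import numFieldNormedType.Exports.
Local Open Scope classical_set_scope.
Local Open Scope ring_scope.

(* Everything rests on condition (D): g(r) = o(|ln f(r)|).  Hence exp(Kt t g) is
   smaller than any power of f, f^2 <= G_t <= f^(2-eps), and G_t is eventually
   decreasing.  The defining relations f(alpha)^2 = kappa/u and G_t(beta) = kappat/u
   make ln u comparable to |ln f| at alpha and beta, which dwarfs g there: this
   gives the limits in (a).  For (b), f(beta) is squeezed between C f(alpha)^lam,
   with lam = 2/(2-eta) close to 1, and c f(alpha); the regularity hypothesis on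
   g o f^-1 turns this into g(beta)/g(alpha) -> 1. *)

Section real_lemmas.
Context {R : realType}.
Implicit Types (h rho : R -> R) (a c y : R).

Lemma inv_posP {h y} : (exists x, 0 < x /\ h x = y) ->
  0 < inv_pos h y /\ h (inv_pos h y) = y.
Proof. exact: xgetPex. Qed.

Lemma inv_geP {a h y} : (exists x, a <= x /\ h x = y) ->
  a <= inv_ge a h y /\ h (inv_ge a h y) = y.
Proof. exact: xgetPex. Qed.

Lemma inv_ge_ivt {a b h y} : a <= b -> {within `[a, b], continuous h} ->
  h b <= y <= h a -> a <= inv_ge a h y /\ h (inv_ge a h y) = y.
Proof.
move=> ab hcont /andP[hby yha]; apply: inv_geP.
have [|c] := @IVT R h a b y ab hcont.
  by rewrite ge_min le_max hby yha orbT.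
by rewrite in_itv /= => /andP[ac _] hc; exists c.
Qed.

Lemma sqr_le_expR (x : R) : 0 <= x -> x ^+ 2 <= expR (2 * x).
Proof.
move=> x0; rewrite expRM_natl; have := expR_ge1Dx x.
by move=> ?; rewrite ler_pXn2r ?nnegrE ?expR_ge0 //; lra.
Qed.

Lemma cvgy_of_decr_preimage (D : set R) h rho c : 0 < c ->
  (forall x y, D x -> x <= y -> D y) -> (exists x, D x) ->
  (forall x y, D x -> x < y -> h y < h x) -> (forall x, D x -> 0 < h x) ->
  (\forall u \near +oo, D (rho u) /\ h (rho u) = c / u) ->
  rho u @[u --> +oo] --> +oo.
Proof.
move=> c0 Dup [x0 Dx0] hdecr hpos Hrho; apply/cvgryPgt => M.
set M' := Num.max M x0.
have DM' : D M' by apply: Dup Dx0 _; rewrite le_max lexx orbT.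
have hM' := hpos _ DM'.
near=> u.
have [Du hu] : D (rho u) /\ h (rho u) = c / u by near: u.
have uc : c / h M' < u by near: u; exact: nbhs_pinfty_gt (num_real _).
have u0 : 0 < u by apply: lt_trans uc; rewrite divr_gt0.
have cu : h (rho u) < h M' by rewrite hu ltr_pdivrMr // mulrC -ltr_pdivrMr.
have MM' : M <= M' by rewrite le_max lexx.
apply: le_lt_trans MM' _; rewrite ltNge; apply/negP.
rewrite le_eqVlt => /orP[/eqP E|lt]; first by move: cu; rewrite E ltxx.
by have := hdecr _ _ Du lt; rewrite ltNge (ltW cu).
Unshelve. all: by end_near.
Qed.

Lemma cvg_ratio1 {T} {F : set_system T} {FF : Filter F} (x y : T -> R) :
  (forall e, 0 < e -> \forall u \near F,
     [/\ 0 < y u, x u <= (1 + e) * y u & y u <= (1 + e) * x u]) ->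
  (fun u => x u / y u) @ F --> (1 : R).
Proof.
move=> Hxy; apply/cvgrPdist_le => e e0.
near=> u.
have [y0 xle yle] : [/\ 0 < y u, x u <= (1 + e) * y u & y u <= (1 + e) * x u].
  by near: u; exact: Hxy.
have xy_le : x u / y u <= 1 + e by rewrite ler_pdivrMr.
have xy_ge : 1 - e <= x u / y u.
  rewrite ler_pdivlMr //; have x0 : 0 < x u by nra.
  nra.
rewrite ler_norml; apply/andP; split; lra.
Unshelve. all: by end_near.
Qed.

Lemma near_right0_comp {T} {F : set_system T} {FF : Filter F}
    {P : R -> Prop} {s : T -> R} :
  (forall d, 0 < d -> \forall u \near F, 0 < s u < d) ->
  (\forall z \near 0^'+, P z) -> \forall u \near F, P (s u).
Proof.
move=> s0 /nbhs_ballP[d d0 Hd]; near=> u.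
have /andP[su0 sud] : 0 < s u < d by near: u; exact: s0.
apply: Hd => /=; last by [].
by rewrite /ball /= sub0r normrN gtr0_norm.
Unshelve. all: by end_near.
Qed.

Lemma exists_eta_powR_le {w e : R} : 0 <= w -> 0 < e ->
  exists2 eta, 0 < eta < 2 & (2 / (2 - eta)) `^ w <= 1 + e.
Proof.
move=> w0 e0; have l0 : 0 < ln (1 + e) by rewrite ln_gt0 // ltrDl.
set eta := Num.min 1 (ln (1 + e) / (w + 1)).
have eta1 : eta <= 1 by rewrite ge_min lexx.
have etal : eta * (w + 1) <= ln (1 + e).
  by rewrite -ler_pdivlMr ?ltr_wpDl // ge_min lexx orbT.
have eta0 : 0 < eta by rewrite lt_min ltr01 divr_gt0 // ltr_wpDl.
exists eta; first lra.
have lam1 : 1 <= 2 / (2 - eta) by rewrite ler_pdivlMr; lra.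
have lam_eta : 2 / (2 - eta) - 1 <= eta.
  by rewrite lerBlDr ler_pdivrMr; nra.
rewrite /powR gt_eqF ?(lt_le_trans ltr01) // -[1 + e]lnK ?posrE ?ltr_wpDl //.
rewrite ler_expR; have := le_ln1Dx (x := 2 / (2 - eta) - 1) ltac:(lra).
rewrite addrC subrK => lnlam; nra.
Qed.

End real_lemmas.

Section scales.
Variable R : realType.
Variables (f g : R -> R).
Hypotheses (f_pos : forall r, 0 < r -> 0 < f r)
  (f_decr : forall r s, 0 < r -> r < s -> f s < f r)
  (f_onto : forall y, 0 < y -> exists r, 0 < r /\ f r = y)
  (g_pos : forall r, 0 <= r -> 0 < g r)
  (g_incr : forall r s, 0 <= r -> r < s -> g r < g s).

Lemma inv_posK r : 0 < r -> inv_pos f (f r) = r.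
Proof.
move=> r0; have [|p0 fp] := @inv_posP _ f (f r); first by exists r.
case: (ltgtP (inv_pos f (f r)) r) => // lt.
- by have := f_decr _ _ p0 lt; rewrite fp ltxx.
- by have := f_decr _ _ r0 lt; rewrite fp ltxx.
Qed.

Lemma inv_pos_le {r y} : 0 < r -> 0 < y -> f r <= y -> inv_pos f y <= r.
Proof.
move=> r0 y0 fry; have [p0 fp] := inv_posP (f_onto _ y0).
by rewrite leNgt; apply/negP => /(f_decr _ _ r0); rewrite fp ltNge fry.
Qed.

Lemma inv_pos_ge {r y} : 0 < r -> 0 < y -> y <= f r -> r <= inv_pos f y.
Proof.
move=> r0 y0 yfr; have [p0 fp] := inv_posP (f_onto _ y0).
by rewrite leNgt; apply/negP => /(f_decr _ _ p0); rewrite fp ltNge yfr.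
Qed.

Lemma g_le {r s} : 0 <= r -> r <= s -> g r <= g s.
Proof. by move=> r0; rewrite le_eqVlt => /predU1P[->|/(g_incr _ _ r0)/ltW]. Qed.


Hypotheses (f_cont : forall r, 0 < r -> {for r, continuous f})
  (g_cont : {within [set x : R | 0 <= x], continuous g})
  (D_decr : exists r0, forall r s, r0 <= r -> r <= s ->
      g s / `|ln (f s)| <= g r / `|ln (f r)|)
  (D_lim : (fun r => g r / `|ln (f r)|) @ +oo --> (0 : R)).

Lemma g_le_neg_ln_f {eta} : 0 < eta -> exists2 M, 0 < M & forall r, M < r ->
  [/\ 0 < f r, f r < 1 & g r <= eta * - ln (f r)].
Proof.
move=> eta0.
have /cvgrPdist_le /(_ eta eta0) [M1 [_ HM1]] := D_lim.
have [r1 [r10 fr1]] := f_onto _ ltr01.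
exists (Num.max M1 r1); first by rewrite lt_max r10 orbT.
move=> r; rewrite gt_max => /andP[rM1 rr1].
have r0 : 0 < r by apply: lt_trans rr1.
have fr0 := f_pos _ r0; have fr_lt1 : f r < 1 by rewrite -fr1 f_decr.
have ln0 : ln (f r) < 0 by rewrite ln_lt0 // fr0.
split=> //; have := HM1 _ rM1.
rewrite sub0r normrN (ltr0_norm ln0) ger0_norm; last first.
  by rewrite divr_ge0 ?oppr_ge0 ?ltW // g_pos // ltW.
by rewrite ler_pdivrMr // oppr_gt0.
Qed.

Variables (Kt t : R).
Hypotheses (Kt_pos : 0 < Kt) (t_pos : 0 < t).
Let Ktt_gt0 : 0 < Kt * t := mulr_gt0 Kt_pos t_pos.

Lemma Gt_expR r : 0 < r -> Gt f g Kt t r = expR (2 * ln (f r) + Kt * t * g r).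
Proof.
by move=> r0; rewrite /Gt expRD expRM_natl lnK // posrE f_pos.
Qed.

Lemma Gt_ge_sqr r : 0 <= r -> f r ^+ 2 <= Gt f g Kt t r.
Proof.
move=> r0; rewrite /Gt ler_peMr ?sqr_ge0 // -expR0 ler_expR.
by rewrite mulr_ge0 // ltW // g_pos.
Qed.

Lemma Gt_le_powR {eps} : 0 < eps -> exists2 M, 0 < M & forall r, M < r ->
  [/\ 0 < f r, f r < 1 & Gt f g Kt t r <= f r `^ (2 - eps)].
Proof.
move=> eps0; have [M M0 HM] := g_le_neg_ln_f (divr_gt0 eps0 Ktt_gt0).
exists M => // r rM; have [fr0 fr1 gr] := HM r rM; split=> //.
have cg : Kt * t * g r <= eps * - ln (f r).
  by rewrite mulrC -ler_pdivlMr // mulrAC.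
rewrite Gt_expR ?(lt_trans M0) // /powR gt_eqF // ler_expR; lra.
Qed.

Lemma Gt_between_sqr_powR eps : 0 < eps < 1 -> exists M, 0 < M /\
  forall r, M < r -> f r ^+ 2 <= Gt f g Kt t r /\ Gt f g Kt t r <= f r `^ (2 - eps).
Proof.
move=> /andP[eps0 _]; have [M M0 HM] := Gt_le_powR eps0.
exists M; split=> // r rM; have [_ _ Gle] := HM r rM.
by split=> //; apply: Gt_ge_sqr; rewrite ltW // (lt_trans M0).
Qed.

Lemma Gt_le_f : exists2 M, 0 < M & forall r, M < r ->
  0 < f r /\ Gt f g Kt t r <= f r.
Proof.
have [M M0 HM] := Gt_le_powR ltr01; exists M => // r /HM[fr0 _ Gle]; split=> //.
move: Gle; have -> : 2 - 1 = 1 :> R by lra.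
by rewrite powRr1 // ltW.
Qed.

Lemma g_continuous_pos r : 0 < r -> {for r, continuous g}.
Proof.
move=> r0; have : {within [set x : R | 0 < x], continuous g}.
  by apply: continuous_subspaceW g_cont => x /= /ltW.
rewrite continuous_open_subspace; last exact: open_gt.
by apply; rewrite inE.
Qed.

Lemma Gt_continuous r : 0 < r -> {for r, continuous (Gt f g Kt t)}.
Proof.
move=> r0.
change {for r, continuous ((fun r => f r ^+ 2) \* (fun r => expR (Kt * t * g r)))}.
apply: continuousM.
  rewrite (_ : (fun r => f r ^+ 2) = f \* f); last by apply: funext => x; rewrite expr2.
  by apply: continuousM; exact: f_cont.
apply: (continuous_comp (f := fun r => Kt * t * g r)); last exact: continuous_expR.
by apply: continuousM; [exact: cvg_cst | exact: g_continuous_pos].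
Qed.

Lemma Gt_cont_strict_decr : exists a, cont_strict_decr_from (Gt f g Kt t) a.
Proof.
have [r0 Hr0] := D_decr.
have ic0 : 0 < (Kt * t)^-1 by rewrite invr_gt0.
have [M M0 HM] := g_le_neg_ln_f ic0.
set m := Num.max M r0.
have Mm : M <= m by rewrite le_max lexx.
have r0m : r0 <= m by rewrite le_max lexx orbT.
exists (m + 1); split.
  apply: continuous_in_subspaceT => x; rewrite inE /= => ax.
  by apply: Gt_continuous; lra.
move=> x y ax xy.
have [fx0 fx1 gx] := HM x ltac:(lra).
have [fy0 fy1 _] := HM y ltac:(lra).
have lnx0 : ln (f x) < 0 by rewrite ln_lt0 // fx0.
have lny0 : ln (f y) < 0 by rewrite ln_lt0 // fy0.
have lnxy : ln (f y) < ln (f x) by rewrite ltr_ln ?posrE // f_decr //; lra.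
have := Hr0 x y ltac:(lra) (ltW xy).
rewrite (ltr0_norm lnx0) (ltr0_norm lny0).
(* [q] is the value of [g / |ln f|] at [x]; it bounds that ratio at [y] by (D) and
   [Kt t q <= 1], so [ln G_t <= (2 - Kt t q) ln f] at [y], with equality at [x] *)
set q := g x / - ln (f x) => qy.
have gxq : g x = q * - ln (f x) by rewrite /q divfK // oppr_eq0 lt_eqF.
have gyq : g y <= q * - ln (f y) by rewrite -ler_pdivrMr // oppr_gt0.
have cq1 : Kt * t * q <= 1.
  by rewrite -ler_pdivlMl // mulr1 /q ler_pdivrMr // oppr_gt0.
have cgy : Kt * t * g y <= Kt * t * q * - ln (f y) by rewrite -[X in _ <= X]mulrA ler_pM2l.
have slope : (2 - Kt * t * q) * (ln (f y) - ln (f x)) < 0.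
  by rewrite pmulr_rlt0 ?subr_lt0 //; lra.
rewrite !Gt_expR; [|lra|lra]; rewrite ltr_expR gxq; lra.
Qed.

Lemma wt_div_powR_cvg0 (K c A delta : R) (rho : R -> R) :
  0 <= K -> 0 <= c -> 0 < delta -> rho u @[u --> +oo] --> +oo ->
  (\forall u \near +oo, 2 * ln (f (rho u)) + c * g (rho u) = A - ln u) ->
  (fun u => wt g K t (rho u) / u `^ delta) @ +oo --> (0 : R).
Proof.
move=> K0 c0 d0 /cvgryPgt rho_oo Hln.
set k := K * t; have k0 : 0 <= k by rewrite mulr_ge0 // ltW.
(* with [g <= delta / D |ln f|] at [rho u], [delta ln u >= delta A + 2 (2 + k) g (rho u)] *)
set D := 2 + k + delta * c.
have D0 : 0 < D by rewrite /D; have := mulr_ge0 (ltW d0) c0; lra.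
have [M M0 HM] := g_le_neg_ln_f (divr_gt0 d0 D0).
apply/cvgrPdist_le => e e0.
near=> u.
have Hu : 2 * ln (f (rho u)) + c * g (rho u) = A - ln u by near: u.
have [_ _ gr] : [/\ 0 < f (rho u), f (rho u) < 1 &
  g (rho u) <= delta / D * - ln (f (rho u))] by apply: HM; near: u; exact: rho_oo.
have uB : expR (- A - 2 / delta * ln e) < u by near: u; exact: nbhs_pinfty_gt (num_real _).
have u0 : 0 < u by apply: lt_trans uB; exact: expR_gt0.
have G0 : 0 < g (rho u) by apply/g_pos/ltW/(lt_trans M0); near: u; exact: rho_oo.
rewrite /wt -/k; set G := g (rho u) in Hu gr G0 *; set L := - ln (f (rho u)) in Hu gr.
rewrite sub0r normrN ger0_norm; last first.
  by rewrite divr_ge0 ?powR_ge0 // mulr_ge0 ?sqr_ge0 ?expR_ge0.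
rewrite /powR gt_eqF //.
apply: (@le_trans _ _ (expR (2 * G) * expR (k * G) / expR (delta * ln u))).
  by rewrite ler_wpM2r ?invr_ge0 ?expR_ge0 // ler_wpM2r ?expR_ge0 // sqr_le_expR // ltW.
rewrite -expRD -expRN -expRD -[e]lnK ?posrE // ler_expR.
have DG : D * G <= delta * L by move: gr; rewrite mulrAC ler_pdivlMr // mulrC.
have lnuB : - A - 2 / delta * ln e < ln u.
  by rewrite -[X in X < _]expRK ltr_ln ?posrE ?expR_gt0.
have dlnu : - (delta * A) - 2 * ln e < delta * ln u.
  move: lnuB; rewrite -(ltr_pM2l d0) mulrBr mulrN mulrA mulrCA divff ?gt_eqF //.
  by rewrite mulr1.
have dcG : 0 <= delta * c * G by rewrite !mulr_ge0 // ltW.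
have dlnuE : delta * ln u = delta * A + 2 * (delta * L) - delta * c * G.
  by rewrite (_ : ln u = A - (2 * ln (f (rho u)) + c * G)) /L; [ring | lra].
rewrite dlnuE in dlnu *; rewrite /D in DG; lra.
Unshelve. all: by end_near.
Qed.

Variables (K kappa : R).
Hypotheses (K_pos : 0 < K) (kappa_pos : 0 < kappa).
Local Notation alpha := (alpha_t f kappa).

Lemma alpha_tP {u} : 0 < u ->
  0 < alpha u /\ f (alpha u) ^+ 2 = kappa / u.
Proof.
move=> u0; have ku : 0 < kappa / u by rewrite divr_gt0.
have sq0 : 0 < Num.sqrt (kappa / u) by rewrite sqrtr_gt0.
have [r0 fr] := inv_posP (f_onto _ sq0).
by apply: inv_posP; exists (inv_pos f (Num.sqrt (kappa / u))); rewrite fr sqr_sqrtr // ltW.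
Qed.

Lemma alpha_t_cvgy : alpha u @[u --> +oo] --> +oo.
Proof.
apply: (cvgy_of_decr_preimage [set x | 0 < x] (fun r => f r ^+ 2) _ _ kappa_pos).
- by move=> x y /= x0 /(lt_le_trans x0).
- by exists 1; exact: ltr01.
- move=> x y /= x0 xy; rewrite ltr_pXn2r ?nnegrE ?ltW ?f_pos ?f_decr //.
  exact: lt_trans xy.
- by move=> x /= /f_pos fx0; rewrite exprn_gt0.
- by near=> u; apply: alpha_tP; near: u; exact: nbhs_pinfty_gt (num_real _).
Unshelve. all: by end_near.
Qed.

Lemma ln_f_alpha_t : \forall u \near +oo,
  2 * ln (f (alpha u)) = ln kappa - ln u.
Proof.
near=> u; have u0 : 0 < u by near: u; exact: nbhs_pinfty_gt (num_real _).
have [a0 fa] := alpha_tP u0.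
by rewrite mulr_natl -lnXn ?f_pos // fa ln_div ?posrE.
Unshelve. all: by end_near.
Qed.

Lemma wt_alpha_t_cvg0 delta : 0 < delta ->
  (fun u => wt g K t (alpha u) / u `^ delta) @ +oo --> (0 : R).
Proof.
move=> d0; apply: (@wt_div_powR_cvg0 K 0 (ln kappa)) => //.
- exact: ltW.
- exact: alpha_t_cvgy.
- by apply: filterS ln_f_alpha_t => u ->; rewrite mul0r addr0.
Qed.

Lemma scaled_f_alpha_t_small {c} : 0 < c -> forall d, 0 < d ->
  \forall u \near +oo, 0 < c * f (alpha u) < d.
Proof.
move=> c0 d d0; near=> u.
have ud : c ^+ 2 * kappa / d ^+ 2 < u.
  by near: u; exact: nbhs_pinfty_gt (num_real _).
have u0 : 0 < u by apply: le_lt_trans ud; rewrite divr_ge0 ?mulr_ge0 ?sqr_ge0 // ltW.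
have [a0 fa] := alpha_tP u0.
have cs0 : 0 < c * f (alpha u) by rewrite mulr_gt0 ?f_pos.
rewrite cs0 /= -(ltr_pXn2r (n := 2)) ?nnegrE ?ltW // exprMn fa.
by move: ud; rewrite mulrA !ltr_pdivrMr ?exprn_gt0 //; lra.
Unshelve. all: by end_near.
Qed.

Variables (a kappat : R).
Hypotheses (kappat_pos : 0 < kappat) (a_admissible : cont_strict_decr_from (Gt f g Kt t) a).
Local Notation beta := (beta_t f g Kt t a kappat).

Lemma Gt_gt0_from {x} : a <= x -> 0 < Gt f g Kt t x.
Proof.
have [_ Gdecr] := a_admissible; move=> ax.
set m := Num.max x 0.
have xm : x <= m by rewrite le_max lexx.
have m0 : 0 <= m by rewrite le_max lexx orbT.
have xm1 : x < m + 1 by lra.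
by apply: lt_trans (Gdecr _ _ ax xm1); rewrite Gt_expR ?expR_gt0 //; lra.
Qed.

Lemma beta_tP : \forall u \near +oo,
  a <= beta u /\ Gt f g Kt t (beta u) = kappat / u.
Proof.
have [Gcont Gdecr] := a_admissible.
have Ga := Gt_gt0_from (lexx a).
have [M1 M10 HM1] := Gt_le_f.
near=> u.
have ua : kappat / Gt f g Kt t a < u by near: u; exact: nbhs_pinfty_gt (num_real _).
have u0 : 0 < u by apply: lt_trans ua; rewrite divr_gt0.
have yGa : kappat / u < Gt f g Kt t a by rewrite ltr_pdivrMr // mulrC -ltr_pdivrMr.
have [r [r0 fr]] := f_onto _ (divr_gt0 kappat_pos u0).
set b := Num.max (Num.max M1 r) a + 1.
have [M1b rb ab] : [/\ M1 < b, r < b & a < b].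
  by rewrite /b; split; rewrite ltr_pwDr ?lt_max ?le_max ?lexx ?orbT.
have Gb : Gt f g Kt t b <= kappat / u.
  have [_ Gbf] := HM1 _ M1b; rewrite -fr.
  by apply: le_trans Gbf _; apply/ltW/f_decr.
apply: inv_ge_ivt (ltW ab) _ _; last by rewrite Gb ltW.
by apply: continuous_subspaceW Gcont => x /=; rewrite in_itv /= => /andP[].
Unshelve. all: by end_near.
Qed.

Lemma beta_t_cvgy : beta u @[u --> +oo] --> +oo.
Proof.
have [_ Gdecr] := a_admissible.
apply: (cvgy_of_decr_preimage [set x | a <= x] (Gt f g Kt t) _ _ kappat_pos).
- by move=> x y /= ax /(le_trans ax).
- by exists a => /=.
- exact: Gdecr.
- by move=> x /= /Gt_gt0_from.
- exact: beta_tP.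
Qed.

Lemma ln_Gt_beta_t : \forall u \near +oo,
  2 * ln (f (beta u)) + Kt * t * g (beta u) = ln kappat - ln u.
Proof.
have /cvgryPgt beta0 := beta_t_cvgy.
near=> u.
have u0 : 0 < u by near: u; exact: nbhs_pinfty_gt (num_real _).
have [_ Gb] : a <= beta u /\ Gt f g Kt t (beta u) = kappat / u by near: u; exact: beta_tP.
have b0 : 0 < beta u by near: u; exact: beta0.
by have := congr1 (@ln R) Gb; rewrite Gt_expR // expRK ln_div ?posrE.
Unshelve. all: by end_near.
Qed.

Lemma wt_beta_t_cvg0 delta : 0 < delta ->
  (fun u => wt g Kt t (beta u) / u `^ delta) @ +oo --> (0 : R).
Proof.
move=> d0; apply: (@wt_div_powR_cvg0 Kt (Kt * t) (ln kappat)) => //.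
- exact: ltW.
- exact: ltW.
- exact: beta_t_cvgy.
- exact: ln_Gt_beta_t.
Qed.

Variable omega : R.
Hypothesis g_finv_regular : forall c lam, 0 < c -> 1 <= lam ->
  forall e, 0 < e -> \forall s \near 0^'+,
    g (inv_pos f (c * s `^ lam)) / g (inv_pos f s) <= lam `^ omega + e.

Lemma f_beta_t_ge {eta} : 0 < eta < 2 -> \forall u \near +oo,
  expR ((ln kappat - ln kappa) / (2 - eta)) * f (alpha u) `^ (2 / (2 - eta))
    <= f (beta u).
Proof.
move=> /andP[eta0 eta2]; have eta2' : 0 < 2 - eta by rewrite subr_gt0.
have [M M0 HM] := g_le_neg_ln_f (divr_gt0 eta0 Ktt_gt0).
have /cvgryPgt beta_oo := beta_t_cvgy.
near=> u.
have a0 : 0 < alpha u.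
  by apply: (proj1 (alpha_tP _)); near: u; exact: nbhs_pinfty_gt (num_real _).
have [fb0 _ gb] : [/\ 0 < f (beta u), f (beta u) < 1 &
  g (beta u) <= eta / (Kt * t) * - ln (f (beta u))] by apply: HM; near: u.
have lnb : 2 * ln (f (beta u)) + Kt * t * g (beta u) = ln kappat - ln u.
  by near: u; exact: ln_Gt_beta_t.
have lns : 2 * ln (f (alpha u)) = ln kappa - ln u by near: u; exact: ln_f_alpha_t.
have gb' : Kt * t * g (beta u) <= eta * - ln (f (beta u)).
  by rewrite mulrC -ler_pdivlMr // mulrAC.
(* [(2 - eta) ln f(beta) <= ln G_t(beta) = ln kappat - ln u] *)
rewrite /powR gt_eqF ?f_pos // -expRD -[X in _ <= X]lnK ?posrE // ler_expR.
rewrite -(ler_pM2l eta2') mulrDr.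
have -> : (2 - eta) * ((ln kappat - ln kappa) / (2 - eta)) = ln kappat - ln kappa.
  by field; rewrite gt_eqF.
have -> : (2 - eta) * (2 / (2 - eta) * ln (f (alpha u))) = 2 * ln (f (alpha u)).
  by field; rewrite gt_eqF.
lra.
Unshelve. all: by end_near.
Qed.

Lemma g_beta_t_le {eta e} : 0 < eta < 2 -> 0 < e -> \forall u \near +oo,
  g (beta u) <= ((2 / (2 - eta)) `^ omega + e) * g (alpha u).
Proof.
move=> eta02 e0; have /andP[eta0 eta2] := eta02.
set lam := 2 / (2 - eta); set C := (ln kappat - ln kappa) / (2 - eta).
have lam1 : 1 <= lam by rewrite ler_pdivlMr ?subr_gt0 //; lra.
have s_small d : 0 < d -> \forall u \near +oo, 0 < f (alpha u) < d.
  by move=> /(scaled_f_alpha_t_small ltr01); apply: filterS => u; rewrite mul1r.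
have HC := near_right0_comp s_small (g_finv_regular _ _ (expR_gt0 C) lam1 _ e0).
have /cvgryPgt beta_oo := beta_t_cvgy.
near=> u.
have a0 : 0 < alpha u.
  by apply: (proj1 (alpha_tP _)); near: u; exact: nbhs_pinfty_gt (num_real _).
have b0 : 0 < beta u by near: u; exact: beta_oo.
have fb_ge : expR C * f (alpha u) `^ lam <= f (beta u).
  by near: u; exact: f_beta_t_ge.
have HCu : g (inv_pos f (expR C * f (alpha u) `^ lam)) /
    g (inv_pos f (f (alpha u))) <= lam `^ omega + e by near: u; exact: HC.
have sl0 : 0 < expR C * f (alpha u) `^ lam by rewrite mulr_gt0 ?expR_gt0 ?powR_gt0 ?f_pos.
have gC := g_le (ltW b0) (inv_pos_ge b0 sl0 fb_ge).
have ga0 : 0 < g (alpha u) := g_pos _ (ltW a0).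
move: HCu; rewrite inv_posK // ler_pdivrMr //.
exact: le_trans gC.
Unshelve. all: by end_near.
Qed.

Lemma f_beta_t_le : \forall u \near +oo,
  f (beta u) <= Num.sqrt (kappat / kappa) * f (alpha u).
Proof.
have /cvgryPgt beta_oo := beta_t_cvgy.
near=> u.
have u0 : 0 < u by near: u; exact: nbhs_pinfty_gt (num_real _).
have [a0 fa] := alpha_tP u0.
have [_ Gb] : a <= beta u /\ Gt f g Kt t (beta u) = kappat / u.
  by near: u; exact: beta_tP.
have b0 : 0 < beta u by near: u; exact: beta_oo.
have cs0 : 0 < Num.sqrt (kappat / kappa) * f (alpha u).
  by rewrite mulr_gt0 ?f_pos // sqrtr_gt0 divr_gt0.
have : f (beta u) ^+ 2 <= (Num.sqrt (kappat / kappa) * f (alpha u)) ^+ 2.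
  have kk : 0 <= kappat / kappa by rewrite divr_ge0 // ltW.
  rewrite exprMn fa sqr_sqrtr //.
  have -> : kappat / kappa * (kappa / u) = kappat / u by field; rewrite !gt_eqF.
  by rewrite -Gb Gt_ge_sqr // ltW.
by have := f_pos _ b0; nra.
Unshelve. all: by end_near.
Qed.

Lemma g_alpha_t_le {e} : 0 < e -> \forall u \near +oo,
  g (alpha u) <= (1 + e) * g (beta u).
Proof.
move=> e0; set c := Num.sqrt (kappat / kappa).
have c0 : 0 < c by rewrite sqrtr_gt0 divr_gt0.
have ic0 : 0 < c^-1 by rewrite invr_gt0.
have HC := near_right0_comp (scaled_f_alpha_t_small c0)
  (g_finv_regular _ _ ic0 (lexx 1) _ e0).
have /cvgryPgt beta_oo := beta_t_cvgy.
near=> u.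
have a0 : 0 < alpha u.
  by apply: (proj1 (alpha_tP _)); near: u; exact: nbhs_pinfty_gt (num_real _).
have b0 : 0 < beta u by near: u; exact: beta_oo.
have fb_le : f (beta u) <= c * f (alpha u) by near: u; exact: f_beta_t_le.
have HCu : g (inv_pos f (c^-1 * (c * f (alpha u)) `^ 1)) /
    g (inv_pos f (c * f (alpha u))) <= 1 `^ omega + e by near: u; exact: HC.
have cs0 : 0 < c * f (alpha u) by rewrite mulr_gt0 ?f_pos.
have [r0 _] := inv_posP (f_onto _ cs0).
have gcs0 : 0 < g (inv_pos f (c * f (alpha u))) by apply/g_pos/ltW.
have gb := g_le (ltW r0) (inv_pos_le b0 cs0 fb_le).
move: HCu; rewrite (powRr1 (ltW cs0)) mulKf ?gt_eqF // powR1 /= inv_posK //.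
rewrite ler_pdivrMr // => HCu; apply: le_trans HCu _.
by rewrite ler_wpM2l // addr_ge0 ?ltW.
Unshelve. all: by end_near.
Qed.

Hypothesis omega_ge0 : 0 <= omega.

Lemma g_beta_alpha_cvg1 :
  (fun u => g (beta u) / g (alpha u)) @ +oo --> (1 : R).
Proof.
apply: cvg_ratio1 => e e0.
have e20 : 0 < e / 2 by rewrite divr_gt0.
have [eta eta02 lam_le] := exists_eta_powR_le omega_ge0 e20.
have up := g_beta_t_le eta02 e20.
have lo := g_alpha_t_le e0.
near=> u.
have u0 : 0 < u by near: u; exact: nbhs_pinfty_gt (num_real _).
have ga0 : 0 < g (alpha u) by apply/g_pos/ltW/(proj1 (alpha_tP u0)).
split=> //; last by near: u.
apply: le_trans (_ : _ <= ((2 / (2 - eta)) `^ omega + e / 2) * g (alpha u)) _.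
  by near: u.
by apply: ler_wpM2r; [exact: ltW | lra].
Unshelve. all: by end_near.
Qed.

End scales.

Theorem lemma4p2 (R : realType) (f g : R -> R) (K Kt C6 R0 t kappa kappat : R)
  (* parts of assumption (A) concerning f and g *)
  (f_pos : forall r, 0 < r -> 0 < f r)
  (f_decr : forall r s, 0 < r -> r < s -> f s < f r)
  (f_cont : forall r, 0 < r -> {for r, continuous f})
  (f_onto : forall y, 0 < y -> exists r, 0 < r /\ f r = y)
  (g_pos : forall r, 0 <= r -> 0 < g r)
  (g_incr : forall r s, 0 <= r -> r < s -> g r < g s)
  (g_cont : {within [set x : R | 0 <= x], continuous g})
  (R0_pos : 0 < R0) (C6_ge1 : 1 <= C6)
  (A3 : forall r, R0 <= r -> g (r + 1) <= C6 * g r)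
  (* constants of the heat kernel estimate *)
  (K_pos : 0 < K) (Kt_pos : 0 < Kt)
  (* condition (D) *)
  (D_decr : exists r0, forall r s, r0 <= r -> r <= s ->
      g s / `|ln (f s)| <= g r / `|ln (f r)|)
  (D_lim : (fun r => g r / `|ln (f r)|) @ +oo --> (0 : R))
  (t_pos : 0 < t) (kappa_pos : 0 < kappa) (kappat_pos : 0 < kappat) :
  (* a half-line where G_t is continuous and strictly decreasing exists *)
  (exists a, cont_strict_decr_from (Gt f g Kt t) a)
  /\
  (* (a), first part *)
  (forall eps, 0 < eps < 1 -> exists reps, 0 < reps /\
     forall r, reps < r ->
       f r ^+ 2 <= Gt f g Kt t r /\ Gt f g Kt t r <= f r `^ (2 - eps))
  /\
  (* (a), limit for alpha_t *)
  (forall delta, 0 < delta ->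
     (fun u => wt g K t (alpha_t f kappa u) / u `^ delta) @ +oo --> (0 : R))
  /\
  (* (a), limit for beta_t, for any admissible half-line [a, +oo) *)
  (forall a, cont_strict_decr_from (Gt f g Kt t) a ->
     forall delta, 0 < delta ->
     (fun u => wt g Kt t (beta_t f g Kt t a kappat u) / u `^ delta) @ +oo
       --> (0 : R))
  /\
  (* (b) *)
  ((exists omega, 0 <= omega /\
      forall c lam, 0 < c -> 1 <= lam ->
        forall e, 0 < e -> \forall s \near 0^'+,
          g (inv_pos f (c * s `^ lam)) / g (inv_pos f s) <= lam `^ omega + e) ->
   forall a, cont_strict_decr_from (Gt f g Kt t) a ->
     (fun u => g (beta_t f g Kt t a kappat u) / g (alpha_t f kappa u)) @ +oo
       --> (1 : R)).
Proof.
split; first exact: Gt_cont_strict_decr.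
split; first by move=> eps; apply: Gt_between_sqr_powR.
split; first by move=> delta; apply: wt_alpha_t_cvg0.
split; first by move=> a Ha delta; apply: wt_beta_t_cvg0.
by move=> [omega [omega_ge0 Gfinv]] a Ga; move: Gfinv omega_ge0; apply: g_beta_alpha_cvg1.
Qed.
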